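(* Let $\mathsf X$ and $\mathsf A$ be finite sets, let $p:\mathsf X\times\mathsf A\times\mathcal P(\mathsf X)\to\mathcal P(\mathsf X)$ and $r:\mathsf X\times\mathsf A\times\mathcal P(\mathsf X)\to[0,\infty)$, and suppose there are constants $L_1,K_1\ge 0$ such that for all $x,\hat x\in\mathsf X$, $a,\hat a\in\mathsf A$, $\mu,\hat\mu\in\mathcal P(\mathsf X)$: $$|r(x,a,\mu)-r(\hat x,\hat a,\hat\mu)|\le L_1\big(1_{\{x\neq\hat x\}}+2\cdot 1_{\{a\neq\hat a\}}+\|\mu-\hat\mu\|_1\big),$$ $$\|p(\cdot|x,a,\mu)-p(\cdot|\hat x,\hat a,\hat\mu)\|_1\le K_1\big(1_{\{x\neq\hat x\}}+2\cdot 1_{\{a\neq\hat a\}}+\|\mu-\hat\mu\|_1\big).$$ Let $\mathsf U=\mathcal P(\mathsf A)$ and define $P(\cdot|x,u,\mu)=\sum_{a\in\mathsf A}p(\cdot|x,a,\mu)\,u(a)$ and $R(x,u,\mu)=\sum_{a\in\mathsf A}r(x,a,\mu)\,u(a)$. Then for all $x,\hat x\in\mathsf X$, $u,\hat u\in\mathsf U$, $\mu,\hat\mu\in\mathcal P(\mathsf X)$: $$|R(x,u,\mu)-R(\hat x,\hat u,\hat\mu)|\le L_1\big(1_{\{x\neq\hat x\}}+\|u-\hat u\|_1+\|\mu-\hat\mu\|_1\big),$$ $$\|P(\cdot|x,u,\mu)-P(\cdot|\hat x,\hat u,\hat\mu)\|_1\le K_1\big(1_{\{x\neq\hat x\}}+\|u-\hat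 u\|_1+\|\mu-\hat\mu\|_1\big).$$
   Context: For a finite set $\mathsf E$, $\mathcal P(\mathsf E)$ denotes the set of probability distributions on $\mathsf E$, viewed as vectors in $\mathbb R^{\mathsf E}$ and endowed with the $l_1$-norm $\|\cdot\|_1$. *)

From mathcomp Require Import all_boot all_order all_algebra.
Set Implicit Arguments. Unset Strict Implicit. Unset Printing Implicit Defensive.
Import Order.TTheory GRing.Theory Num.Theory.
Local Open Scope ring_scope.

Definition is_prob (R : numDomainType) (E : finType) (m : {ffun E -> R}) : bool :=
  [forall e, 0 <= m e] && (\sum_(e : E) m e == 1).

Definition l1 (R : numDomainType) (E : finType) (m : {ffun E -> R}) : R :=
  \sum_(e : E) `|m e|.

Definition ind (R : numDomainType) (b : bool) : R := if b then 1 else 0.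

Definition mixP (R : numDomainType) (X A : finType)
  (p : X -> A -> {ffun X -> R} -> {ffun X -> R})
  (x : X) (u : {ffun A -> R}) (mu : {ffun X -> R}) : {ffun X -> R} :=
  [ffun y => \sum_(a : A) p x a mu y * u a].

Definition mixR (R : numDomainType) (X A : finType)
  (r : X -> A -> {ffun X -> R} -> R)
  (x : X) (u : {ffun A -> R}) (mu : {ffun X -> R}) : R :=
  \sum_(a : A) r x a mu * u a.

(* Mixing is linear in the weights, so the difference of two mixtures splits
   into sum_a u(a) (p(x,a,mu) - p(xh,a,muh)), controlled by the hypothesis
   with a = ah, plus sum_a (u(a) - uh(a)) p(xh,a,muh).  The signed weights
   u - uh have total mass 0: their positive and negative parts have the same
   mass s = ||u - uh||_1 / 2, and coupling them through the product weights
   bounds the second term by s times the diameter 2 K1 of {p(xh,a,muh)}. *)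

From mathcomp Require Import all_boot all_order all_algebra.
From mathcomp Require Import lra.
Set Implicit Arguments. Unset Strict Implicit. Unset Printing Implicit Defensive.
Import Order.TTheory GRing.Theory Num.Theory.
Local Open Scope ring_scope.

Lemma l1_0 (R : numDomainType) (E : finType) : l1 (0 : {ffun E -> R}) = 0.
Proof. by rewrite /l1 big1 // => e _; rewrite ffunE normr0. Qed.

Lemma ler_l1D (R : numDomainType) (E : finType) (m m' : {ffun E -> R}) :
  l1 (m + m') <= l1 m + l1 m'.
Proof. by rewrite /l1 -big_split; apply: ler_sum => e _; rewrite ffunE ler_normD. Qed.

Lemma l1Z (R : numDomainType) (E : finType) (c : R) (m : {ffun E -> R^o}) :
  l1 (c *: m) = `|c| * l1 m.
Proof. by rewrite /l1 mulr_sumr; apply: eq_bigr => e _; rewrite ffunE normrM. Qed.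

Section Seminorm.
Variables (R : realFieldType) (V : lmodType R) (N : V -> R).
Hypothesis normD : forall x y, N (x + y) <= N x + N y.
Hypothesis normZ : forall (c : R) x, N (c *: x) = `|c| * N x.

Lemma seminorm0 : N 0 = 0.
Proof. by rewrite -(scale0r (0 : V)) normZ normr0 mul0r. Qed.

Lemma seminorm_sum (I : finType) (f : I -> V) : N (\sum_i f i) <= \sum_i N (f i).
Proof.
elim/big_ind2: _ => [|x1 y1 x2 y2 h1 h2|//]; first by rewrite seminorm0.
exact: le_trans (normD _ _) (lerD h1 h2).
Qed.

Lemma seminorm_sum_scale_le (I : finType) (w : I -> R) (q : I -> V) (B : R) :
  (forall i, 0 <= w i) -> (forall i, N (q i) <= B) ->
  N (\sum_i w i *: q i) <= (\sum_i w i) * B.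
Proof.
move=> w_ge0 qB; rewrite mulr_suml; apply: le_trans (seminorm_sum _) _.
by apply: ler_sum => i _; rewrite normZ ger0_norm // ler_wpM2l.
Qed.

Lemma sum_scale_coupling (I : finType) (u v : I -> R) (q : I -> V) :
  (\sum_j v j) *: \sum_i u i *: q i - (\sum_i u i) *: \sum_j v j *: q j =
  \sum_i \sum_j (u i * v j) *: (q i - q j).
Proof.
under [RHS]eq_bigr do rewrite (eq_bigr _ (fun j _ => scalerBr _ _ _)) sumrB.
rewrite sumrB [X in _ = _ - X]exchange_big /= !scaler_sumr; congr (_ - _).
  apply: eq_bigr => i _; rewrite scalerA -scaler_suml -mulr_sumr.
  by congr (_ *: _); exact: mulrC.
by apply: eq_bigr => j _; rewrite scalerA -scaler_suml -mulr_suml.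
Qed.

Lemma seminorm_sum_scaleB_le (I : finType) (u v : I -> R) (q : I -> V) (D : R) :
  (forall i, 0 <= u i) -> (forall i, 0 <= v i) -> \sum_i u i = \sum_i v i ->
  (forall i j, N (q i - q j) <= D) ->
  N (\sum_i u i *: q i - \sum_i v i *: q i) <= (\sum_i u i) * D.
Proof.
move=> u_ge0 v_ge0 uv qD; set S := \sum_i u i in uv *.
have S_ge0 : 0 <= S by exact: sumr_ge0.
have [S_gt0|] := ltP 0 S; last first.
  move=> S_le0; have S0 : S = 0 by apply/le_anti; rewrite S_le0.
  have u0 i : u i = 0 by exact: (psumr_eq0P (fun i _ => u_ge0 i) S0).
  have v0 i : v i = 0.
    exact: (psumr_eq0P (fun i _ => v_ge0 i) (etrans (esym uv) S0)).
  by rewrite !big1 ?subrr ?seminorm0 ?S0 ?mul0r // => i _; rewrite (u0, v0) scale0r.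
have coupling : S *: (\sum_i u i *: q i - \sum_i v i *: q i) =
    \sum_p (u p.1 * v p.2) *: (q p.1 - q p.2).
  by rewrite scalerBr {1}uv sum_scale_coupling pair_bigA.
rewrite -(ler_pM2l S_gt0) -[X in X * N _]ger0_norm // -normZ coupling mulrA.
have -> : S * S = \sum_p u p.1 * v p.2 by rewrite {2}uv big_distrlr pair_bigA.
by apply: seminorm_sum_scale_le => [[i j]|[i j]] //=; rewrite mulr_ge0.
Qed.

Lemma seminorm_sum_scale_mass0_le (I : finType) (d : I -> R) (q : I -> V) (C : R) :
  \sum_i d i = 0 -> (forall i j, N (q i - q j) <= 2 * C) ->
  N (\sum_i d i *: q i) <= C * \sum_i `|d i|.
Proof.
move=> d_mass0 qC.
pose dp i := Num.max (d i) 0; pose dn i := - Num.min (d i) 0.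
have dE i : d i = dp i - dn i by rewrite opprK addr_max_min addr0.
have normE i : `|d i| = dp i + dn i.
  by rewrite /dp /dn; case: ger0P; rewrite ?oppr0 ?addr0 ?add0r.
have dp_ge0 i : 0 <= dp i by rewrite le_max lexx orbT.
have dn_ge0 i : 0 <= dn i by rewrite oppr_ge0 ge_min lexx orbT.
have mass : \sum_i dp i = \sum_i dn i.
  by apply/eqP; rewrite -subr_eq0 -sumrB (eq_bigr _ (fun i _ => esym (dE i))) d_mass0.
have -> : \sum_i d i *: q i = \sum_i dp i *: q i - \sum_i dn i *: q i.
  by rewrite -sumrB; apply: eq_bigr => i _; rewrite dE scalerBl.
rewrite (eq_bigr _ (fun i _ => normE i)) big_split /= -mass.
apply: le_trans (seminorm_sum_scaleB_le dp_ge0 dn_ge0 mass qC) _; lra.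
Qed.

Lemma seminorm_mixtureB_le (A : finType) (f g : A -> V) (u uh : {ffun A -> R})
    (K c : R) :
  0 <= K -> is_prob u -> is_prob uh ->
  (forall a, N (f a - g a) <= K * c) ->
  (forall a b, N (g a - g b) <= K * (2 * ind R (a != b))) ->
  N (\sum_a u a *: f a - \sum_a uh a *: g a) <= K * (c + l1 (u - uh)).
Proof.
move=> K_ge0 /andP[/forallP u_ge0 /eqP u1] /andP[_ /eqP uh1] fgK gK.
have -> : \sum_a u a *: f a - \sum_a uh a *: g a =
    \sum_a u a *: (f a - g a) + \sum_a (u - uh) a *: g a.
  rewrite -sumrB -big_split; apply: eq_bigr => a _.
  by rewrite !ffunE scalerBr scalerBl /= addrA addrNK.
apply: le_trans (normD _ _) _; rewrite mulrDr; apply: lerD.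
  by rewrite -[K * c]mul1r -u1; exact: seminorm_sum_scale_le.
rewrite /l1; apply: seminorm_sum_scale_mass0_le.
  by under eq_bigr do rewrite !ffunE; rewrite sumrB u1 uh1 subrr.
move=> a b; apply: le_trans (gK a b) _.
by case: (a != b); rewrite /ind; lra.
Qed.

Lemma lipschitz_mixtureB_le (X A : finType) (F : X -> A -> {ffun X -> R} -> V)
    (K : R) (x xh : X) (u uh : {ffun A -> R}) (mu muh : {ffun X -> R}) :
  0 <= K ->
  (forall x xh a ah mu muh, is_prob mu -> is_prob muh ->
     N (F x a mu - F xh ah muh)
       <= K * (ind R (x != xh) + 2 * ind R (a != ah) + l1 (mu - muh))) ->
  is_prob u -> is_prob uh -> is_prob mu -> is_prob muh ->
  N (\sum_a u a *: F x a mu - \sum_a uh a *: F xh a muh)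
    <= K * (ind R (x != xh) + l1 (u - uh) + l1 (mu - muh)).
Proof.
move=> K_ge0 FK pu puh pmu pmuh; rewrite addrAC.
apply: seminorm_mixtureB_le => // [a | a b].
  by have := FK x xh a a mu muh pmu pmuh; rewrite eqxx /ind /= mulr0 addr0.
have := FK xh xh a b muh muh pmuh pmuh.
by rewrite eqxx subrr l1_0 /ind /= addr0 add0r.
Qed.

End Seminorm.

Lemma mixRE (R : numDomainType) (X A : finType) (r : X -> A -> {ffun X -> R} -> R)
    x u mu :
  mixR r x u mu = \sum_a u a *: (r x a mu : R^o).
Proof. by apply: eq_bigr => a _; rewrite mulrC. Qed.

Lemma mixPE (R : numDomainType) (X A : finType)
    (p : X -> A -> {ffun X -> R} -> {ffun X -> R}) x u mu :
  mixP p x u mu = \sum_a u a *: (p x a mu : {ffun X -> R^o}).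
Proof.
apply/ffunP => y; rewrite !ffunE sum_ffunE.
by apply: eq_bigr => a _; rewrite !ffunE mulrC.
Qed.

Theorem proposition1 (R : realFieldType) (X A : finType)
  (p : X -> A -> {ffun X -> R} -> {ffun X -> R})
  (r : X -> A -> {ffun X -> R} -> R) (L1 K1 : R)
  (hL1 : 0 <= L1) (hK1 : 0 <= K1)
  (hp : forall x a mu, is_prob mu -> is_prob (p x a mu))
  (hr : forall x a mu, is_prob mu -> 0 <= r x a mu)
  (hrL : forall x xh a ah mu muh, is_prob mu -> is_prob muh ->
     `|r x a mu - r xh ah muh|
       <= L1 * (ind R (x != xh) + 2 * ind R (a != ah) + l1 (mu - muh)))
  (hpL : forall x xh a ah mu muh, is_prob mu -> is_prob muh ->
     l1 (p x a mu - p xh ah muh)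
       <= K1 * (ind R (x != xh) + 2 * ind R (a != ah) + l1 (mu - muh))) :
  forall (x xh : X) (u uh : {ffun A -> R}) (mu muh : {ffun X -> R}),
    is_prob u -> is_prob uh -> is_prob mu -> is_prob muh ->
    `|mixR r x u mu - mixR r xh uh muh|
      <= L1 * (ind R (x != xh) + l1 (u - uh) + l1 (mu - muh))
    /\
    l1 (mixP p x u mu - mixP p xh uh muh)
      <= K1 * (ind R (x != xh) + l1 (u - uh) + l1 (mu - muh)).
Proof.
move=> x xh u uh mu muh pu puh pmu pmuh; split.
  rewrite !mixRE.
  by apply: (@lipschitz_mixtureB_le _ R^o (fun z => `|z|) (@ler_normD _ R) (@normrM _)).
rewrite !mixPE.
by apply: (@lipschitz_mixtureB_le _ {ffun X -> R^o} (@l1 R X)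
  (@ler_l1D R X) (@l1Z R X)).
Qed.
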